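(* In the setting of the context, for each cone $\sigma_I\in\Sigma_-$ of the fan of $X_-$, the cone $\hat\sigma_I$ generated by $\overline{\hat b_i}$ for $i\in I\cup\{m+1\}$ belongs to the fan $\hat\Sigma_-$ of $[\mathbb C^{m+1}/\!\!/_{\omega_-}K]$.
   Context: GIT data: $K\cong(\mathbb C^\times)^{\mathrm r}$, $\mathbb L=\mathrm{Hom}(\mathbb C^\times,K)$, characters $D_1,\dots,D_m\in\mathbb L^\vee$; $\angle_I=\{\sum_{i\in I}a_iD_i:a_i>0\}$, $\mathcal A_\omega=\{I:\omega\in\angle_I\}$; fan sequence $0\to\mathbb L\to\mathbb Z^m\xrightarrow{\beta}N\to0$, $b_i=\beta(e_i)$; fan $\Sigma_\omega=\{\sigma_I:\bar I\in\mathcal A_\omega\}$. $X_\pm=X_{\omega_\pm}$, $\Sigma_\pm=\Sigma_{\omega_\pm}$, with $\omega_\pm$ in maximal-dimensional chambers separated by a hyperplane wall $W$; $e$ the primitive generator of $W^\perp$ with $\omega_+\cdot e>0$, $M_\pm=\{i:\pm D_i\cdot e>0\}$, $M_0=\{i:D_i\cdot e=0\}$, $S_-$ the extended set of $X_-$. $D_-=\sum_{i\in(M_+\cup M_-)\setminus S_-}\bar D_i$ is assumed smooth, nef and convex: its support function $\phi_{D_-}$ (with $\phi_{D_-}(\bar b_i)=-a_i$ for $i\notin S_-$ where $D_-=\sum a_i\bar D_i$) is linear on each cone of $\Sigma_-$, has convex graph and $\phi_{D_-}(\bar b_i)\ge a_i$ for $i\in S_-$. Define $\hat\beta:\mathbb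 Z^{m+1}\to N\oplus\mathbb Z$ by $\hat\beta(e_i)=(b_i,1)$ for $i\in M_+\cup M_-$, $(b_i,0)$ for $i\in M_0$, and $\hat\beta(e_{m+1})=(0,1)$; $\hat b_i=\hat\beta(e_i)$; $K$ acts on $\mathbb C^{m+1}$ by $(D_1,\dots,D_m,-D)$ with $D=\sum_{i\in M_+\cup M_-}D_i$, and $\hat\Sigma_-$ is the fan of $[\mathbb C^{m+1}/\!\!/_{\omega_-}K]$. *)

From HB Require Import structures.
From mathcomp Require Import all_boot all_order all_algebra.
From mathcomp Require Import boolp reals.
Set Implicit Arguments. Unset Strict Implicit. Unset Printing Implicit Defensive.
Import Order.TTheory GRing.Theory Num.Theory.
Local Open Scope ring_scope.

Section ToricGIT.
Variable R : realType.

Definition pair (p : nat) (u v : 'rV[R]_p) : R := (u *m v^T) 0 0.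

Definition realv (p : nat) (u : 'rV[int]_p) : 'rV[R]_p := map_mx (fun z : int => z%:~R) u.

(* angle_I = { sum_{i in I} a_i D_i : a_i > 0 } in L^vee (x) R = R^r *)
Definition angle (r k : nat) (c : 'I_k -> 'rV[int]_r) (I : {set 'I_k}) (w : 'rV[R]_r) : Prop :=
  exists a : 'I_k -> R, (forall i, i \in I -> 0 < a i) /\
                        w = \sum_(i in I) a i *: realv (c i).

Definition anticone (r k : nat) (c : 'I_k -> 'rV[int]_r) (w : 'rV[R]_r) (I : {set 'I_k}) : Prop :=
  angle c I w.

Definition cone (p k : nat) (v : 'I_k -> 'rV[R]_p) (I : {set 'I_k}) (x : 'rV[R]_p) : Prop :=
  exists c : 'I_k -> R, (forall i, 0 <= c i) /\ x = \sum_(i in I) c i *: v i.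

Definition in_fan (r p k : nat) (c : 'I_k -> 'rV[int]_r) (v : 'I_k -> 'rV[R]_p)
    (w : 'rV[R]_r) (sigma : 'rV[R]_p -> Prop) : Prop :=
  exists J : {set 'I_k}, anticone c w (~: J) /\ (forall x, sigma x <-> cone v J x).

Definition in_support (r p k : nat) (c : 'I_k -> 'rV[int]_r) (v : 'I_k -> 'rV[R]_p)
    (w : 'rV[R]_r) (x : 'rV[R]_p) : Prop :=
  exists J : {set 'I_k}, anticone c w (~: J) /\ cone v J x.

(* the fan sequence 0 -> L -> Z^m -> N -> 0 tensored with R:
   l |-> (D_i . l)_i, then e_i |-> b_i (b_i = image of b_i in N_R = R^n) *)
Definition fan_sequence (r m n : nat) (D : 'I_m -> 'rV[int]_r) (b : 'I_m -> 'rV[R]_n) : Prop :=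
  [/\ (forall l : 'rV[R]_r, (forall i, pair (realv (D i)) l = 0) -> l = 0),
      (forall x : 'I_m -> R, \sum_i x i *: b i = 0 <->
          exists l : 'rV[R]_r, forall i, x i = pair (realv (D i)) l)
    & (forall y : 'rV[R]_n, exists x : 'I_m -> R, y = \sum_i x i *: b i)].

(* w generic: in the interior of the cone of all D_i and only in full-dimensional angles *)
Definition generic (r k : nat) (c : 'I_k -> 'rV[int]_r) (w : 'rV[R]_r) : Prop :=
  angle c setT w /\
  forall I : {set 'I_k}, angle c I w ->
    \rank (\matrix_(i < k) (if i \in I then realv (c i) else 0)) = r.

Definition same_chamber (r k : nat) (c : 'I_k -> 'rV[int]_r) (w w' : 'rV[R]_r) : Prop :=
  forall I : {set 'I_k}, anticone c w I <-> anticone c w' I.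

Definition primitive (r : nat) (e : 'rV[int]_r) : Prop :=
  forall (k : int) (f : 'rV[int]_r), e = k *: f -> k = 1 \/ k = -1.

(* w+ and w- lie in maximal-dimensional chambers separated by the hyperplane wall
   W = e^perp, with w+ . e > 0 *)
Definition separated_by_wall (r k : nat) (c : 'I_k -> 'rV[int]_r) (e : 'rV[int]_r)
    (wp wm : 'rV[R]_r) : Prop :=
  [/\ generic c wp, generic c wm, 0 < pair wp (realv e), pair wm (realv e) < 0 &
      exists w0 : 'rV[R]_r, pair w0 (realv e) = 0 /\
        exists2 eps : R, 0 < eps &
          forall v : 'rV[R]_r, (forall j, `|v 0 j| < eps) ->
            (0 < pair v (realv e) -> generic c (w0 + v) /\ same_chamber c (w0 + v) wp) /\
            (pair v (realv e) < 0 -> generic c (w0 + v) /\ same_chamber c (w0 + v) wm)].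

Definition Mplus (r m : nat) (D : 'I_m -> 'rV[int]_r) (e : 'rV[int]_r) : {set 'I_m} :=
  [set i | 0 < (D i *m e^T) 0 0].
Definition Mminus (r m : nat) (D : 'I_m -> 'rV[int]_r) (e : 'rV[int]_r) : {set 'I_m} :=
  [set i | (D i *m e^T) 0 0 < 0].

Definition extended_set (r m : nat) (D : 'I_m -> 'rV[int]_r) (w : 'rV[R]_r) : 'I_m -> Prop :=
  fun i => anticone D w (~: [set i]).

(* D_- = sum_{i in (M+ u M-) \ S_-} Dbar_i, coefficient a_i *)
Definition coeffDminus (r m : nat) (D : 'I_m -> 'rV[int]_r) (e : 'rV[int]_r) (wm : 'rV[R]_r)
    (i : 'I_m) : R :=
  if i \in Mplus D e :|: Mminus D e then
    (if `[< extended_set D wm i >] then 0 else 1) else 0.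

(* D_- smooth: its (pairwise distinct) components are disjoint, i.e. no cone of
   Sigma_- contains two distinct rays b_i, b_j of components of D_- *)
Definition Dminus_smooth (r m : nat) (D : 'I_m -> 'rV[int]_r) (e : 'rV[int]_r) (wm : 'rV[R]_r)
    : Prop :=
  forall I : {set 'I_m}, anticone D wm (~: I) ->
    forall i j, i \in I -> j \in I -> coeffDminus D e wm i = 1 -> coeffDminus D e wm j = 1 ->
      i = j.

(* phi is a support function of D_- on Sigma_- which is linear on cones,
   convex (Fulton's convention: phi(t x + (1-t) y) >= t phi x + (1-t) phi y),
   with phi(b_i) = -a_i for i not in S_- and phi(b_i) >= a_i for i in S_- *)
Definition nef_convex_support (r m n : nat) (D : 'I_m -> 'rV[int]_r) (b : 'I_m -> 'rV[R]_n)
    (e : 'rV[int]_r) (wm : 'rV[R]_r) (phi : 'rV[R]_n -> R) : Prop :=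
  [/\ (forall I : {set 'I_m}, anticone D wm (~: I) ->
         exists u : 'rV[R]_n, forall x, cone b I x -> phi x = pair u x),
      (forall x y (t : R), in_support D b wm x -> in_support D b wm y -> 0 <= t <= 1 ->
         in_support D b wm (t *: x + (1 - t) *: y) ->
         t * phi x + (1 - t) * phi y <= phi (t *: x + (1 - t) *: y)),
      (forall i, ~ extended_set D wm i -> phi (b i) = - coeffDminus D e wm i)
    & (forall i, extended_set D wm i -> coeffDminus D e wm i <= phi (b i))].

Definition hatD (r m : nat) (D : 'I_m -> 'rV[int]_r) (e : 'rV[int]_r) : 'I_m.+1 -> 'rV[int]_r :=
  fun i => match unlift ord_max i with
           | Some j => D j
           | None => - \sum_(j in Mplus D e :|: Mminus D e) D j
           end.

Definition hatb (r m n : nat) (D : 'I_m -> 'rV[int]_r) (e : 'rV[int]_r) (b : 'I_m -> 'rV[R]_n)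
    : 'I_m.+1 -> 'rV[R]_(n + 1) :=
  fun i => match unlift ord_max i with
           | Some j => row_mx (b j)
                        (const_mx (if j \in Mplus D e :|: Mminus D e then 1 else 0))
           | None => row_mx 0 (const_mx 1)
           end.

Definition hatI (m : nat) (I : {set 'I_m}) : {set 'I_m.+1} :=
  [set lift ord_max i | i in I] :|: [set ord_max].

End ToricGIT.

(* The complement of I ∪ {m+1} in {1, ..., m+1} is the complement of I, and on it the
   extended characters (D_1, ..., D_m, -D) are just the D_i; so ω_- lies in the angle of
   that complement for the extended data as soon as it does for the original data. *)
From mathcomp Require Import all_boot all_order all_algebra.
From mathcomp Require Import boolp reals.
Set Implicit Arguments. Unset Strict Implicit. Unset Printing Implicit Defensive.
Import Order.TTheory GRing.Theory Num.Theory.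
Local Open Scope ring_scope.

Lemma angle_imset (R : realType) (r k k' : nat)
    (c : 'I_k -> 'rV[int]_r) (c' : 'I_k' -> 'rV[int]_r)
    (f : 'I_k -> 'I_k') (g : 'I_k' -> option 'I_k) (I : {set 'I_k}) (w : 'rV[R]_r) :
  pcancel f g -> (forall i, c' (f i) = c i) ->
  angle c I w -> angle c' (f @: I) w.
Proof.
move=> fK c'f [a [a_gt0 ->]].
exists (fun j => if g j is Some i then a i else 1); split.
  by move=> _ /imsetP[i Ii ->]; rewrite fK; apply: a_gt0.
rewrite big_imset /=; last exact: in2W (pcan_inj fK).
by apply: eq_bigr => i _; rewrite fK c'f.
Qed.

Lemma hatD_lift (r m : nat) (D : 'I_m -> 'rV[int]_r) (e : 'rV[int]_r) (i : 'I_m) :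
  hatD D e (lift ord_max i) = D i.
Proof. by rewrite /hatD liftK. Qed.

Lemma setC_hatI (m : nat) (I : {set 'I_m}) :
  ~: hatI I = lift ord_max @: ~: I.
Proof.
have lift_inj_max := @lift_inj _ (@ord_max m).
apply/setP => j; case: (unliftP ord_max j) => [/= i ->|->].
  by rewrite !(mem_imset _ _ lift_inj_max) !inE (mem_imset _ _ lift_inj_max) lift_eqF orbF.
rewrite !inE eqxx orbT /=; apply/esym/imsetP => -[i _ /eqP].
by rewrite eq_sym lift_eqF.
Qed.

Theorem mainTheorem7 (R : realType) (r m n : nat)
    (D : 'I_m -> 'rV[int]_r) (b : 'I_m -> 'rV[R]_n)
    (e : 'rV[int]_r) (wp wm : 'rV[R]_r) (phi : 'rV[R]_n -> R) :
  fan_sequence D b ->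
  primitive e ->
  separated_by_wall D e wp wm ->
  Dminus_smooth D e wm ->
  nef_convex_support D b e wm phi ->
  forall I : {set 'I_m}, anticone D wm (~: I) ->
    in_fan (hatD D e) (hatb D e b) wm (cone (hatb D e b) (hatI I)).
Proof.
move=> _ _ _ _ _ I sigmaI_in_fan; exists (hatI I); split=> //.
rewrite /anticone setC_hatI.
exact: (angle_imset (liftK ord_max) (hatD_lift D e)).
Qed.
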